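(* Consider the SDP pair and ADMM iteration of the context, with $\mathcal A$ surjective and nonempty KKT set, and suppose the ADMM iterates converge to a KKT point $(X_\star,y_\star,S_\star)$ with $\operatorname{rank}X_\star+\operatorname{rank}S_\star=n$. Then there exists $\bar k_{\mathrm{ID}}\in\mathbb N$ such that for every integer $k\ge\bar k_{\mathrm{ID}}$, $\operatorname{rank}X^{(k)}=\operatorname{rank}X_\star$ and $\operatorname{rank}S^{(k)}=\operatorname{rank}S_\star$.
   Context: $\mathbb S^n$: real symmetric matrices; $\Pi_{\mathbb S^n_+}$ the Frobenius projection onto the PSD cone. SDP pair: minimize $\langle C,X\rangle$ s.t. $\mathcal AX=b$, $X\succeq0$; maximize $b^\top y$ s.t. $\mathcal A^*y+S=C$, $S\succeq0$, where $C,A_1,\dots,A_m\in\mathbb S^n$, $\mathcal AX=(\operatorname{tr}(A_iX))_i$, $\mathcal A^*y=\sum y_iA_i$. KKT point: $\mathcal AX=b$, $\mathcal A^*y+S=C$, $\operatorname{tr}(XS)=0$, $X,S\succeq0$. With $\sigma>0$ and $\mathcal P=\mathcal A^*(\mathcal A\mathcal A^* )^{-1}\mathcal A$, ADMM (one-step form) iterates $Z^{(k+1)}=\mathcal P(-2\Pi_{\mathbb S^n_+}(Z^{(k)})+Z^{(k)})+\Pi_{\mathbb S^n_+}(Z^{(k)})+\mathcal A^*(\mathcal A\mathcal A^* )^{-1}b+\sigma\mathcal PC-\sigma C$ and $X^{(k)}=\Pi_{\mathbb S^n_+}(Z^{(k)})$, $S^{(k)}=\sigma^{-1}\Pi_{\mathbb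 S^n_+}(-Z^{(k)})$; convergence of the iterates to $(X_\star,y_\star,S_\star)$ means $Z^{(k)}\to X_\star-\sigma S_\star$ (equivalently, the classical three-step ADMM iterates converge to that KKT point). *)

From HB Require Import structures.
From mathcomp Require Import all_boot all_order all_algebra.
From mathcomp Require Import all_classical all_reals topology normedtype sequences.
Import numFieldTopology.Exports numFieldNormedType.Exports.
Set Implicit Arguments. Unset Strict Implicit. Unset Printing Implicit Defensive.
Import Order.TTheory GRing.Theory Num.Theory.
Local Open Scope ring_scope.
Local Open Scope classical_set_scope.

Section SDP.
Variables (R : realType) (n m : nat).

Definition sym_mx (X : 'M[R]_n) : Prop := X^T = X.

Definition psd_mx (X : 'M[R]_n) : Prop :=
  sym_mx X /\ forall v : 'cV[R]_n, 0 <= (v^T *m X *m v) 0 0.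

Definition frob_ip (A B : 'M[R]_n) : R := \tr (A^T *m B).
Definition frob_sq (A : 'M[R]_n) : R := frob_ip A A.

Definition is_psd_proj (Z Z' : 'M[R]_n) : Prop :=
  psd_mx Z' /\ forall Y, psd_mx Y -> frob_sq (Z - Z') <= frob_sq (Z - Y).

Definition psd_proj (Z : 'M[R]_n) : 'M[R]_n := xget 0 [set Z' | is_psd_proj Z Z'].

Variable A : 'I_m -> 'M[R]_n.

Definition calA (X : 'M[R]_n) : 'cV[R]_m := \col_(i < m) \tr (A i *m X).
Definition calAadj (y : 'cV[R]_m) : 'M[R]_n := \sum_i y i 0 *: A i.
(* matrix of calA calA-adjoint : (i,j) |-> tr(A_i A_j) *)
Definition gramA : 'M[R]_m := \matrix_(i, j) \tr (A i *m A j).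
Definition pinvA (c : 'cV[R]_m) : 'M[R]_n := calAadj (invmx gramA *m c).
Definition projA (Z : 'M[R]_n) : 'M[R]_n := pinvA (calA Z).

Definition KKT (C : 'M[R]_n) (b : 'cV[R]_m)
  (X : 'M[R]_n) (y : 'cV[R]_m) (S : 'M[R]_n) : Prop :=
  [/\ calA X = b, calAadj y + S = C, \tr (X *m S) = 0, psd_mx X & psd_mx S].

Definition admm_step (C : 'M[R]_n) (b : 'cV[R]_m) (sigma : R) (Z : 'M[R]_n)
  : 'M[R]_n :=
  projA (- (2%:R *: psd_proj Z) + Z) + psd_proj Z + pinvA b
  + sigma *: projA C - sigma *: C.

End SDP.

From HB Require Import structures.
From mathcomp Require Import all_boot all_order all_algebra.
From mathcomp Require Import all_classical all_reals topology normedtype sequences.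
From mathcomp Require Import derive ring lra zify.
Import numFieldTopology.Exports numFieldNormedType.Exports.
Import Order.TTheory GRing.Theory Num.Theory.
Set Implicit Arguments. Unset Strict Implicit. Unset Printing Implicit Defensive.
Local Open Scope ring_scope.
Local Open Scope classical_set_scope.

(* Write Pi for the Frobenius projection onto the PSD cone. It is characterised by
   the variational inequality <Z - Pi Z, Y - Pi Z> <= 0 for all PSD Y, hence it is
   nonexpansive, and for symmetric Z Moreau's decomposition gives
   Pi(-Z) = Pi(Z) - Z with <Pi Z, Pi(-Z)> = 0; for PSD matrices this forces
   Pi(Z) Pi(-Z) = 0, so rank Pi(Z) + rank Pi(-Z) <= n.  The KKT conditions say
   exactly that Xs = Pi(Zs) and sigma Ss = Pi(-Zs) for Zs = Xs - sigma Ss.  The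
   ADMM iterates are symmetric and Z^(k) -> Zs, so by continuity of Pi and lower
   semicontinuity of the rank, eventually rank X^(k) >= rank Xs and
   rank S^(k) >= rank Ss; strict complementarity rank Xs + rank Ss = n turns both
   inequalities into equalities. *)

Section Frobenius.
Variables (R : realType) (n : nat).
Implicit Types (A B D : 'M[R]_n).

Lemma frob_ipDl A B D : frob_ip (A + B) D = frob_ip A D + frob_ip B D.
Proof. by rewrite /frob_ip linearD /= mulmxDl mxtraceD. Qed.

Lemma frob_ipDr A B D : frob_ip D (A + B) = frob_ip D A + frob_ip D B.
Proof. by rewrite /frob_ip mulmxDr mxtraceD. Qed.

Lemma frob_ipZl a A D : frob_ip (a *: A) D = a * frob_ip A D.
Proof. by rewrite /frob_ip linearZ /= -scalemxAl mxtraceZ. Qed.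

Lemma frob_ipZr a A D : frob_ip D (a *: A) = a * frob_ip D A.
Proof. by rewrite /frob_ip -scalemxAr mxtraceZ. Qed.

Lemma frob_ipNl A D : frob_ip (- A) D = - frob_ip A D.
Proof. by rewrite -scaleN1r frob_ipZl mulN1r. Qed.

Lemma frob_ipNr A D : frob_ip D (- A) = - frob_ip D A.
Proof. by rewrite -scaleN1r frob_ipZr mulN1r. Qed.

Lemma frob_ipBl A B D : frob_ip (A - B) D = frob_ip A D - frob_ip B D.
Proof. by rewrite frob_ipDl frob_ipNl. Qed.

Lemma frob_ipBr A B D : frob_ip D (A - B) = frob_ip D A - frob_ip D B.
Proof. by rewrite frob_ipDr frob_ipNr. Qed.

Lemma frob_ipC A B : frob_ip A B = frob_ip B A.
Proof. by rewrite /frob_ip -mxtrace_tr trmx_mul trmxK. Qed.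

Lemma frob_ip0r A : frob_ip A 0 = 0.
Proof. by rewrite /frob_ip mulmx0 linear0. Qed.

Lemma frob_ipE A B : frob_ip A B = \sum_i \sum_j A i j * B i j.
Proof.
rewrite /frob_ip /mxtrace exchange_big /=; apply: eq_bigr => i _.
by rewrite mxE; apply: eq_bigr => j _; rewrite mxE.
Qed.

Lemma frob_sqE A : frob_sq A = \sum_i \sum_j A i j ^+ 2.
Proof. by rewrite /frob_sq frob_ipE; under eq_bigr do under eq_bigr do rewrite -expr2. Qed.

Lemma frob_sq_ge0 A : 0 <= frob_sq A.
Proof. by rewrite frob_sqE; apply: sumr_ge0 => i _; apply: sumr_ge0 => j _; apply: sqr_ge0. Qed.

Lemma sqr_entry_le_frob_sq A i j : A i j ^+ 2 <= frob_sq A.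
Proof.
have sum_ge0 (F : 'I_n -> R) k : (forall l, 0 <= F l) -> F k <= \sum_l F l.
  by move=> F0; rewrite (bigD1 k) //= lerDl sumr_ge0.
rewrite frob_sqE; apply: le_trans (sum_ge0 _ i _); last first.
  by move=> k; apply: sumr_ge0 => l _; apply: sqr_ge0.
by apply: sum_ge0 => l; apply: sqr_ge0.
Qed.

Lemma normr_entry_le_frob_sq A i j : `|A i j| <= 1 + frob_sq A.
Proof.
have := sqr_entry_le_frob_sq A i j; rewrite -real_normK ?num_real //.
have := normr_ge0 (A i j); nra.
Qed.

Lemma frob_sq_eq0 A : frob_sq A <= 0 -> A = 0.
Proof.
move=> A0; apply/matrixP => i j; rewrite mxE; apply/eqP; rewrite -sqrf_eq0 eq_le sqr_ge0 andbT.
exact: le_trans (sqr_entry_le_frob_sq A i j) A0.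
Qed.

Lemma frob_sqZ a A : frob_sq (a *: A) = a ^+ 2 * frob_sq A.
Proof. by rewrite /frob_sq frob_ipZl frob_ipZr mulrA expr2. Qed.

Lemma frob_sqB A B : frob_sq (A - B) = frob_sq A - 2 * frob_ip A B + frob_sq B.
Proof. rewrite /frob_sq frob_ipBl !frob_ipBr (frob_ipC B A); ring. Qed.

End Frobenius.

Section PsdCone.
Variables (R : realType) (n : nat).
Implicit Types (M P Y : 'M[R]_n) (u v w : 'cV[R]_n).

Definition mxform M u v : R := (u^T *m M *m v) 0 0.

Lemma mxformDl M u v w : mxform M (u + v) w = mxform M u w + mxform M v w.
Proof. by rewrite /mxform linearD /= !mulmxDl mxE. Qed.

Lemma mxformDr M u v w : mxform M w (u + v) = mxform M w u + mxform M w v.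
Proof. by rewrite /mxform !mulmxDr mxE. Qed.

Lemma mxformZl M a u w : mxform M (a *: u) w = a * mxform M u w.
Proof. by rewrite /mxform linearZ /= -!scalemxAl mxE. Qed.

Lemma mxformZr M a u w : mxform M w (a *: u) = a * mxform M w u.
Proof. by rewrite /mxform -!scalemxAr mxE. Qed.

Lemma mxform_add M1 M2 u v : mxform (M1 + M2) u v = mxform M1 u v + mxform M2 u v.
Proof. by rewrite /mxform mulmxDr mulmxDl mxE. Qed.

Lemma mxform_scale a M u v : mxform (a *: M) u v = a * mxform M u v.
Proof. by rewrite /mxform -scalemxAr -scalemxAl mxE. Qed.

Lemma mxform_opp M u v : mxform (- M) u v = - mxform M u v.
Proof. by rewrite -scaleN1r mxform_scale mulN1r. Qed.

Lemma sym_mxE M i j : sym_mx M -> M j i = M i j.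
Proof. by move=> sM; rewrite -[in LHS]sM mxE. Qed.

Lemma mxform_tr M u v : mxform M u v = mxform M^T v u.
Proof. by rewrite /mxform -[in LHS](trmxK (u^T *m M *m v)) mxE !trmx_mul trmxK mulmxA. Qed.

Lemma mxform_sym M u v : sym_mx M -> mxform M u v = mxform M v u.
Proof. by move=> sM; rewrite mxform_tr sM. Qed.

Lemma mxform_delta M i v : mxform M (delta_mx i 0) v = (M *m v) i 0.
Proof. by rewrite /mxform trmx_delta -mulmxA -rowE mxE. Qed.

Lemma mxform_outer u v : mxform (u *m u^T) v v = (v^T *m u) 0 0 ^+ 2.
Proof.
rewrite /mxform mulmxA -(mulmxA (v^T *m u)) mxE big_ord1 expr2; congr (_ * _).
by rewrite -[in LHS](trmxK v) -trmx_mul mxE.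
Qed.

Lemma frob_ip_outer M u : frob_ip M (u *m u^T) = mxform M u u.
Proof. by rewrite /frob_ip mulmxA mxtrace_mulC /mxtrace big_ord1 mulmxA [RHS]mxform_tr. Qed.

Lemma mxform_shift M v w t : sym_mx M ->
  mxform M (v + t *: w) (v + t *: w) =
  mxform M v v + 2 * t * mxform M v w + t ^+ 2 * mxform M w w.
Proof.
move=> sM; rewrite !mxformDl !mxformDr !mxformZl !mxformZr (mxform_sym w v sM) expr2; ring.
Qed.

Lemma psd_mxform_ge0 P v : psd_mx P -> 0 <= mxform P v v.
Proof. by case=> _; apply. Qed.

Lemma psd0 : psd_mx (0 : 'M[R]_n).
Proof. by split=> [|v]; rewrite ?/sym_mx ?trmx0 // mulmx0 mul0mx mxE. Qed.

Lemma psdD P Y : psd_mx P -> psd_mx Y -> psd_mx (P + Y).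
Proof.
move=> [sP P0] [sY Y0]; split=> [|v]; first by rewrite /sym_mx linearD /= sP sY.
by have := mxform_add P Y v v; rewrite /mxform => ->; apply: addr_ge0.
Qed.

Lemma psdZ a P : 0 <= a -> psd_mx P -> psd_mx (a *: P).
Proof.
move=> a0 [sP P0]; split=> [|v]; first by rewrite /sym_mx linearZ /= sP.
by have := mxform_scale a P v v; rewrite /mxform => ->; apply: mulr_ge0.
Qed.

Lemma psd_outer u : psd_mx (u *m u^T).
Proof.
split=> [|v]; first by rewrite /sym_mx trmx_mul trmxK.
by have := mxform_outer u v; rewrite /mxform => ->; apply: sqr_ge0.
Qed.

Lemma linear_term_eq0 (a b : R) : (forall t, 0 <= 2 * t * a + t ^+ 2 * b) -> a = 0.
Proof.
move=> H; set e := (`|b| + 1)^-1.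
have b0 := normr_ge0 b.
have e0 : 0 < e by rewrite invr_gt0; lra.
have ee : e * (`|b| + 1) = 1 by rewrite mulVf // gt_eqF //; lra.
have eb : e * b <= e * `|b| by apply: ler_wpM2l; [exact: ltW | exact: ler_norm].
have qe0 : 0 <= a * a * e by rewrite -expr2 mulr_ge0 ?sqr_ge0 ?ltW.
have := H (- a * e); rewrite expr2 => Ht.
have Ht' : 2 * (a * a * e) <= a * a * e * (e * b) by lra.
have : a * a * e * (e * b) <= a * a * e * (1 - e) by apply: ler_wpM2l => //; lra.
move=> h; have a2e : a * a * e <= 0 by nra.
have a2 : a * a <= 0 by move: a2e; rewrite pmulr_lle0.
by apply/eqP; rewrite -sqrf_eq0 eq_le sqr_ge0 andbT expr2.
Qed.

Lemma psd_mxform_eq0 P v : psd_mx P -> mxform P v v = 0 -> P *m v = 0.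
Proof.
move=> Pp v0; apply/matrixP => i j; rewrite (ord1 j) [RHS]mxE -mxform_delta.
rewrite (mxform_sym _ _ Pp.1).
apply: (@linear_term_eq0 _ (mxform P (delta_mx i 0) (delta_mx i 0))) => t.
by have := psd_mxform_ge0 (v + t *: delta_mx i 0) Pp; rewrite mxform_shift ?v0 ?add0r //; case: Pp.
Qed.

End PsdCone.

Arguments psd0 {R n}.

Section PsdInnerProduct.
Variables (R : realType) (n : nat).
Implicit Types (M P Y : 'M[R]_n) (u v w : 'cV[R]_n).

Lemma psd_diag_ge0 Y k : psd_mx Y -> 0 <= Y k k.
Proof. by move=> /(psd_mxform_ge0 (delta_mx k 0)); rewrite mxform_delta -colE mxE. Qed.

Lemma psd_schur Y k : psd_mx Y -> 0 < Y k k ->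
  psd_mx (Y - (Y k k)^-1 *: (col k Y *m (col k Y)^T)).
Proof.
move=> Yp d0; have sY := Yp.1.
split=> [|w]; first by rewrite /sym_mx linearB /= linearZ /= trmx_mul trmxK sY.
change (0 <= mxform (Y - (Y k k)^-1 *: (col k Y *m (col k Y)^T)) w w).
rewrite mxform_add mxform_opp mxform_scale mxform_outer.
set e : 'cV[R]_n := delta_mx k 0.
have -> : (w^T *m col k Y) 0 0 = mxform Y w e by rewrite colE /mxform mulmxA.
have Yee : mxform Y e e = Y k k by rewrite mxform_delta -colE mxE.
set c := mxform Y w e; set d := Y k k.
(* completing the square: test the form at w - (c / d) e *)
have := psd_mxform_ge0 (w + (- c / d) *: e) Yp.
rewrite mxform_shift // -/c Yee -/d.
have -> : (- c / d) ^+ 2 * d = c ^+ 2 / d by field; rewrite gt_eqF.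
have -> : 2 * (- c / d) * c = - 2 * (c ^+ 2 / d) by field; rewrite gt_eqF.
rewrite mulrC; lra.
Qed.

Lemma psd_col_eq0 Y k : psd_mx Y -> Y k k = 0 -> col k Y = 0.
Proof. by move=> Yp Ykk; rewrite colE psd_mxform_eq0 // mxform_delta -colE mxE. Qed.

(* Symmetric Gaussian elimination: split off the Schur complement column by column. *)
Lemma psd_sum_outer Y : psd_mx Y -> exists s : seq 'cV[R]_n, Y = \sum_(u <- s) u *m u^T.
Proof.
suff cols k : forall Y, psd_mx Y -> (forall i j : 'I_n, (k <= j)%N -> Y i j = 0) ->
    exists s : seq 'cV[R]_n, Y = \sum_(u <- s) u *m u^T.
  by move=> Yp; apply: (cols n) => // i j; rewrite leqNgt ltn_ord.
elim: k => [|k IH] {}Y Yp Y0.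
  by exists [::]; rewrite big_nil; apply/matrixP => i j; rewrite mxE Y0.
have [kn|nk] := ltnP k n; last first.
  by apply: IH => // i j kj; have := ltn_ord j; lia.
set kk := Ordinal kn; set u := col kk Y.
have sY := Yp.1.
have [Ykk0|Ykk_neq0] := eqVneq (Y kk kk) 0.
  apply: IH => // i j; rewrite leq_eqVlt => /orP[/eqP kj|]; last exact: Y0.
  have -> : j = kk by apply: val_inj.
  by have /matrixP/(_ i 0) := psd_col_eq0 Yp Ykk0; rewrite !mxE.
have d0 : 0 < Y kk kk by rewrite lt_def Ykk_neq0 psd_diag_ge0.
have [||s Ys] := IH (Y - (Y kk kk)^-1 *: (u *m u^T)); first exact: psd_schur.
  move=> i j kj; rewrite !mxE big_ord1 !mxE.
  move: kj; rewrite leq_eqVlt => /orP[/eqP kj|kj].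
    have -> : j = kk by apply: val_inj.
    by field; rewrite gt_eqF.
  by rewrite [Y j kk](sym_mxE _ _ sY) (Y0 i j kj) (Y0 kk j kj) !mulr0 subr0.
exists (Num.sqrt (Y kk kk)^-1 *: u :: s); rewrite big_cons -Ys.
rewrite -scalemxAl linearZ /= -scalemxAr scalerA -expr2 sqr_sqrtr ?invr_ge0 ?ltW //.
by rewrite addrC subrK.
Qed.

Lemma frob_ip_sum_outer P (s : seq 'cV[R]_n) :
  frob_ip P (\sum_(u <- s) u *m u^T) = \sum_(u <- s) mxform P u u.
Proof.
rewrite /frob_ip mulmx_sumr raddf_sum; apply: eq_bigr => u _ /=.
exact: frob_ip_outer.
Qed.

Lemma frob_ip_psd_ge0 P Y : psd_mx P -> psd_mx Y -> 0 <= frob_ip P Y.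
Proof.
move=> Pp /psd_sum_outer[s ->]; rewrite frob_ip_sum_outer.
by apply: sumr_ge0 => u _; apply: psd_mxform_ge0.
Qed.

Lemma frob_ip_psd_eq0 P Y : psd_mx P -> psd_mx Y -> frob_ip P Y = 0 -> P *m Y = 0.
Proof.
move=> Pp /psd_sum_outer[s ->]; rewrite frob_ip_sum_outer => /eqP.
rewrite psumr_eq0 => [/allP s0|u _]; last exact: psd_mxform_ge0.
rewrite mulmx_sumr big1_seq // => u /s0 /eqP /(psd_mxform_eq0 Pp) Pu.
by rewrite mulmxA Pu mul0mx.
Qed.

End PsdInnerProduct.

Section PsdVariationalInequality.
Variables (R : realType) (n : nat).
Implicit Types (Z P Y : 'M[R]_n).

Definition psd_vi Z P := psd_mx P /\ forall Y, psd_mx Y -> frob_ip (Z - P) (Y - P) <= 0.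

Lemma is_psd_proj_vi Z P : is_psd_proj Z P -> psd_vi Z P.
Proof.
move=> [Pp Pmin]; split=> // Y Yp.
set a := frob_ip (Z - P) (Y - P); set c := frob_sq (Y - P).
have c0 : 0 <= c := frob_sq_ge0 _.
rewrite leNgt; apply/negP => a0.
(* moving from P towards Y by t = a / (a + c) stays in the cone and gets closer to Z *)
set t := a / (a + c).
have ac0 : 0 < a + c by lra.
have t0 : 0 < t by apply: divr_gt0.
have t1 : t <= 1 by rewrite /t ler_pdivrMr // mul1r; lra.
have tac : t * (a + c) = a by rewrite /t mulfVK // gt_eqF.
have Pt : psd_mx (P + t *: (Y - P)).
  have -> : P + t *: (Y - P) = (1 - t) *: P + t *: Y.
    by rewrite scalerBr scalerBl scale1r [RHS]addrC addrCA.
  by apply: psdD; apply: psdZ => //; lra.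
have := Pmin _ Pt; rewrite opprD addrA (frob_sqB (Z - P)) frob_ipZr frob_sqZ -/a -/c => H.
have H2 : 2 * t * a <= t ^+ 2 * c by lra.
rewrite expr2 in H2; nra.
Qed.

Lemma psd_vi_nonexpansive Z1 P1 Z2 P2 :
  psd_vi Z1 P1 -> psd_vi Z2 P2 -> frob_sq (P1 - P2) <= frob_sq (Z1 - Z2).
Proof.
move=> [P1p H1] [P2p H2]; have h1 := H1 _ P2p; have h2 := H2 _ P1p.
have h3 := frob_sq_ge0 ((Z1 - Z2) - (P1 - P2)).
move: h1 h2 h3; rewrite /frob_sq !frob_ipBl !frob_ipBr.
have := frob_ipC Z1 Z2; have := frob_ipC Z1 P1; have := frob_ipC Z1 P2.
have := frob_ipC Z2 P1; have := frob_ipC Z2 P2; have := frob_ipC P1 P2.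
lra.
Qed.

Lemma psd_vi_unique Z P1 P2 : psd_vi Z P1 -> psd_vi Z P2 -> P1 = P2.
Proof.
move=> h1 h2; have := psd_vi_nonexpansive h1 h2; rewrite subrr /frob_sq frob_ip0r.
by move/frob_sq_eq0/eqP; rewrite subr_eq0 => /eqP.
Qed.

Lemma psd_vi_moreau Z P : sym_mx Z -> psd_vi Z P ->
  psd_vi (- Z) (P - Z) /\ frob_ip P (P - Z) = 0.
Proof.
move=> sZ [Pp HP]; have sP := Pp.1.
(* testing the inequality at Y = 0 and Y = 2 P *)
have := HP 0 psd0; have := HP (P + P) (psdD Pp Pp).
rewrite sub0r frob_ipNr addrK => hB hA.
have PPZ : frob_ip P (P - Z) = 0.
  by rewrite frob_ipC -opprB frob_ipNl; apply/eqP; rewrite oppr_eq0 eq_le hB -oppr_le0 hA.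
split=> //; split=> [|Y Yp].
  split=> [|v]; first by rewrite /sym_mx linearB /= sP sZ.
  have := HP _ (psdD Pp (psd_outer v)); rewrite (addrC P) addrK frob_ip_outer => Hv.
  by change (0 <= mxform (P - Z) v v); rewrite -opprB mxform_opp oppr_ge0.
rewrite opprB addKr frob_ipNl frob_ipDr -[Z - P]opprB frob_ipNr PPZ oppr0 addr0 oppr_le0.
exact: frob_ip_psd_ge0.
Qed.

End PsdVariationalInequality.

Section PsdProjectionExists.
Variables (R : realType) (n : nat).
Implicit Types (Z Y : 'M[R]_n).

Lemma vec_mx_entry_continuous i j :
  continuous (fun v : 'rV[R]_(n * n) => vec_mx v i j).
Proof.
have -> : (fun v : 'rV[R]_(n * n) => vec_mx v i j) = fun v => v 0 (mxvec_index i j).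
  by apply: funext => v; rewrite mxE.
exact: coord_continuous.
Qed.

Lemma sum_continuous (T : topologicalType) (I : finType) (F : I -> T -> R) :
  (forall i, continuous (F i)) -> continuous (fun x => \sum_i F i x).
Proof. by move=> Fc; apply: continuous_big => [|i _]; [exact: add_continuous | exact: Fc]. Qed.

Lemma mulr_continuous (T : topologicalType) (f g : T -> R) :
  continuous f -> continuous g -> continuous (fun x => f x * g x).
Proof. by move=> fc gc x; exact: (@continuousM _ _ f g x (fc x) (gc x)). Qed.

Lemma frob_sq_vec_mx_continuous Z :
  continuous (fun v : 'rV[R]_(n * n) => frob_sq (Z - vec_mx v)).
Proof.
have -> : (fun v : 'rV[R]_(n * n) => frob_sq (Z - vec_mx v)) =
    fun v => \sum_i \sum_j (Z i j - vec_mx v i j) * (Z i j - vec_mx v i j).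
  apply: funext => v; rewrite frob_sqE; apply: eq_bigr => i _.
  by apply: eq_bigr => j _; rewrite !mxE expr2.
apply: sum_continuous => i; apply: sum_continuous => j.
have Zc : continuous (fun v : 'rV[R]_(n * n) => Z i j - vec_mx v i j).
  by move=> v; apply: continuousB; [exact: cst_continuous | exact: vec_mx_entry_continuous].
exact: mulr_continuous.
Qed.

Lemma mxform_vec_mx_continuous w :
  continuous (fun v : 'rV[R]_(n * n) => mxform (vec_mx v) w w).
Proof.
have -> : (fun v : 'rV[R]_(n * n) => mxform (vec_mx v) w w) =
    fun v => \sum_j (\sum_i w i 0 * vec_mx v i j) * w j 0.
  apply: funext => v; rewrite /mxform mxE; apply: eq_bigr => j _.
  by rewrite [(w^T *m _) 0 j]mxE; congr (_ * _); apply: eq_bigr => i _; rewrite [w^T 0 i]mxE.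
apply: sum_continuous => j; apply: mulr_continuous; last exact: cst_continuous.
apply: sum_continuous => i; apply: mulr_continuous; first exact: cst_continuous.
exact: vec_mx_entry_continuous.
Qed.

Lemma closed_continuous_preimage (T U : topologicalType) (f : T -> U) (D : set U) :
  continuous f -> closed D -> closed (f @^-1` D).
Proof. by move=> fc; apply: preimage_closed => x _; exact: fc. Qed.

Lemma closed_psd_vec_mx : closed [set v : 'rV[R]_(n * n) | psd_mx (vec_mx v)].
Proof.
have -> : [set v : 'rV[R]_(n * n) | psd_mx (vec_mx v)] =
    \bigcap_(ij in [set: 'I_n * 'I_n])
      [set v | vec_mx v ij.2 ij.1 - vec_mx v ij.1 ij.2 = 0] `&`
    \bigcap_(w in [set: 'cV[R]_n]) [set v | 0 <= mxform (vec_mx v) w w].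
  apply/seteqP; split=> v /= [sv vv].
    split=> [[i j] _|w _]; last exact: vv.
    by rewrite /= [vec_mx v j i](sym_mxE _ _ sv) subrr.
  split=> [|w]; last exact: vv.
  by apply/matrixP => i j; apply/eqP; rewrite mxE -subr_eq0; exact/eqP/(sv (i, j)).
apply: closedI; [apply: closed_bigI => ij _ | apply: closed_bigI => w _].
  apply: (closed_continuous_preimage (D := [set y | y = 0])); last exact: closed_eq.
  by move=> v; apply: continuousB; exact: vec_mx_entry_continuous.
apply: (closed_continuous_preimage (D := [set y : R | 0 <= y]) (@mxform_vec_mx_continuous w)).
exact: closed_ge.
Qed.

Lemma psd_proj_exists Z : exists P, is_psd_proj Z P.
Proof.
set s := frob_sq Z; have s0 : 0 <= s := frob_sq_ge0 Z.
pose K := [set v : 'rV[R]_(n * n) | psd_mx (vec_mx v) /\ frob_sq (Z - vec_mx v) <= s].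
have mxvecK_in Y : psd_mx Y -> frob_sq (Z - Y) <= s -> K (mxvec Y).
  by move=> Yp YZ; rewrite /K /= mxvecK.
have K0 : K !=set0 by exists (mxvec 0); apply: mxvecK_in; [exact: psd0 | rewrite subr0].
set c := 2 + 2 * s.
have Kbox : K `<=` [set v | forall k, `[- c, c]%classic (v 0 k)].
  move=> v [_ vs] k; case/mxvec_indexP: k => i j.
  rewrite /= in_itv /= -ler_norml.
  have -> : v 0 (mxvec_index i j) = vec_mx v i j by rewrite mxE.
  have -> : vec_mx v i j = Z i j - (Z - vec_mx v) i j by rewrite !mxE opprB addrC subrK.
  apply: le_trans (ler_normB _ _) _.
  have := normr_entry_le_frob_sq Z i j; have := normr_entry_le_frob_sq (Z - vec_mx v) i j.
  rewrite -/s /c; lra.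
have Kcl : closed K.
  apply: closedI; first exact: closed_psd_vec_mx.
  apply: (closed_continuous_preimage (D := [set y : R | y <= s])
    (@frob_sq_vec_mx_continuous Z)); exact: closed_le.
have Kc : compact K.
  apply: (subclosed_compact Kcl _ Kbox).
  by apply: (@rV_compact _ _ (fun=> `[- c, c]%classic)) => _; exact: segment_compact.
have [v vK Pmin] :=
  compact_EVT_min K0 Kc (continuous_subspaceT (@frob_sq_vec_mx_continuous Z)).
move: vK; rewrite inE => -[Pp Ps].
exists (vec_mx v); split=> // Y Yp.
have [YZ|ZY] := lerP (frob_sq (Z - Y)) s; last exact: le_trans Ps (ltW ZY).
by have := Pmin (mxvec Y); rewrite inE mxvecK; apply; apply: mxvecK_in.
Qed.

End PsdProjectionExists.

Section MatrixNorm.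
Variable R : realType.

Lemma near_dist_lt m p (X : 'M[R]_(m, p)) e : 0 < e -> \forall Y \near X, `|X - Y| < e.
Proof. by move=> e0; apply/nbhs_ballP; exists e => //= Y; rewrite -ball_normE. Qed.

Lemma mx_entry_le_norm m p (A : 'M[R]_(m, p)) i j : `|A i j| <= `|A|.
Proof.
by rewrite [leRHS]/Num.norm /= mx_normrE; apply/bigmax_geP; right => /=; exists (i, j).
Qed.

Lemma mx_norm_le m p (A : 'M[R]_(m, p)) c : 0 <= c -> (forall i j, `|A i j| <= c) -> `|A| <= c.
Proof.
by move=> c0 Ac; rewrite [leLHS]/Num.norm /= mx_normrE; apply: bigmax_le => // -[i j] _.
Qed.

Lemma mx_norm_mulmx_le m p q (A : 'M[R]_(m, p)) (B : 'M[R]_(p, q)) :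
  `|A *m B| <= p%:R * (`|A| * `|B|).
Proof.
apply: mx_norm_le => [|i j]; first by rewrite !mulr_ge0.
rewrite mxE; apply: le_trans (ler_norm_sum _ _ _) _.
rewrite mulr_natl -[p in _ *+ p]card_ord -sumr_const; apply: ler_sum => k _.
by rewrite normrM ler_pM ?mx_entry_le_norm.
Qed.

Variable n : nat.
Implicit Types A : 'M[R]_n.

Lemma sqr_mx_norm_le_frob_sq A : `|A| ^+ 2 <= frob_sq A.
Proof.
have f0 := frob_sq_ge0 A; rewrite -(sqr_sqrtr f0) lerXn2r ?nnegrE ?sqrtr_ge0 //.
apply: mx_norm_le => [|i j]; first exact: sqrtr_ge0.
by rewrite -sqrtr_sqr ler_sqrt // sqr_entry_le_frob_sq.
Qed.

Lemma frob_sq_le_mx_norm A : frob_sq A <= (n * n)%:R * `|A| ^+ 2.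
Proof.
rewrite frob_sqE natrM -mulrA mulr_natl -[n in _ *+ n]card_ord -sumr_const.
apply: ler_sum => i _; rewrite mulr_natl -[n in _ *+ n]card_ord -sumr_const.
apply: ler_sum => j _; rewrite -real_normK ?num_real //.
by rewrite lerXn2r ?nnegrE ?mx_entry_le_norm.
Qed.

End MatrixNorm.

Section PsdProjection.
Variables (R : realType) (n : nat).
Implicit Types (Z P : 'M[R]_n).

Lemma psd_projP Z : is_psd_proj Z (psd_proj Z).
Proof. by rewrite /psd_proj; apply: xgetPex; exact: psd_proj_exists. Qed.

Lemma psd_proj_vi Z : psd_vi Z (psd_proj Z).
Proof. exact/is_psd_proj_vi/psd_projP. Qed.

Lemma psd_projE Z P : psd_vi Z P -> psd_proj Z = P.
Proof. exact: psd_vi_unique (psd_proj_vi Z). Qed.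

Lemma psd_proj_lipschitz Z1 Z2 :
  `|psd_proj Z1 - psd_proj Z2| <= n%:R * `|Z1 - Z2|.
Proof.
rewrite -(@ler_sqr _ _ (n%:R * _)) ?nnegrE ?mulr_ge0 // exprMn -natrX.
apply: le_trans (sqr_mx_norm_le_frob_sq _) _; apply: le_trans (frob_sq_le_mx_norm _).
exact: psd_vi_nonexpansive (psd_proj_vi Z1) (psd_proj_vi Z2).
Qed.

Lemma psd_proj_continuous : continuous (@psd_proj R n).
Proof.
move=> Z0; apply/(@cvgrPdist_lt _ _ _ (nbhs Z0)) => e e0.
have e1 : 0 < e / n.+1%:R by rewrite divr_gt0.
apply: filterS (near_dist_lt Z0 e1) => Z Z0Z.
apply: le_lt_trans (psd_proj_lipschitz Z0 Z) _.
apply: (@le_lt_trans _ _ (n.+1%:R * `|Z0 - Z|)); first by rewrite ler_wpM2r ?ler_nat.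
by rewrite mulrC -ltr_pdivlMr.
Qed.

Lemma psd_proj_opp Z : sym_mx Z -> psd_proj (- Z) = psd_proj Z - Z.
Proof. by move=> sZ; apply: psd_projE; have [] := psd_vi_moreau sZ (psd_proj_vi Z). Qed.

Lemma psd_proj_mul_opp Z : sym_mx Z -> psd_proj Z *m psd_proj (- Z) = 0.
Proof.
move=> sZ; have [vi PPZ] := psd_vi_moreau sZ (psd_proj_vi Z).
by rewrite psd_proj_opp //; apply: frob_ip_psd_eq0 PPZ; [exact: (psd_proj_vi Z).1 | exact: vi.1].
Qed.

Lemma psd_proj_complementary (X S : 'M[R]_n) (s : R) :
  psd_mx X -> psd_mx S -> \tr (X *m S) = 0 -> 0 < s ->
  psd_proj (X - s *: S) = X /\ psd_proj (- (X - s *: S)) = s *: S.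
Proof.
move=> Xp Sp XS0 s0; have sX := Xp.1; have sS := Sp.1.
have XSs : psd_vi (X - s *: S) X.
  split=> // Y Yp; rewrite addrAC subrr add0r frob_ipNl frob_ipZl frob_ipBr.
  have -> : frob_ip S X = 0 by rewrite frob_ipC /frob_ip sX.
  by rewrite subr0 oppr_le0; apply: mulr_ge0; [exact: ltW | exact: frob_ip_psd_ge0].
have sZ : sym_mx (X - s *: S) by rewrite /sym_mx linearB linearZ /= sX sS.
by rewrite psd_proj_opp // (psd_projE XSs) opprB addrC subrK.
Qed.

Lemma mxrank_psd_proj_opp Z : sym_mx Z ->
  (\rank (psd_proj Z) + \rank (psd_proj (- Z)) <= n)%N.
Proof.
move=> sZ; have := mxrank_mul_min (psd_proj Z) (psd_proj (- Z)).
by rewrite psd_proj_mul_opp // mxrank0; lia.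
Qed.

End PsdProjection.

Section RankSemicontinuity.
Variable R : realType.

Lemma unitmx_near_id r (W : 'M[R]_r) : r%:R * `|W - 1%:M| < 1 -> W \in unitmx.
Proof.
move=> Wr; apply/negPn/negP; rewrite unitmxE unitfE negbK => /det0P[u u0 uW].
set s := \sum_i `|u 0 i|.
(* u = - u (W - 1), so every |u_i| is at most |W - 1| s *)
have ui i : `|u 0 i| <= `|W - 1%:M| * s.
  have -> : u 0 i = - (u *m (W - 1%:M)) 0 i by rewrite mulmxBr uW mulmx1 sub0r !mxE opprK.
  rewrite normrN mxE mulr_sumr; apply: le_trans (ler_norm_sum _ _ _) _.
  by apply: ler_sum => k _; rewrite normrM mulrC ler_wpM2r ?mx_entry_le_norm.
have : s <= r%:R * (`|W - 1%:M| * s).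
  by rewrite mulr_natl -[r in _ *+ r]card_ord -sumr_const; apply: ler_sum => i _.
have [k uk] : exists k, u 0 k != 0.
  apply/existsP; apply: contraNT u0; rewrite negb_exists => /forallP u0.
  by apply/eqP/rowP => k; rewrite mxE; apply/eqP/negPn.
have s0 : 0 < s.
  rewrite /s (bigD1 k) //=; have : 0 < `|u 0 k| by rewrite normr_gt0.
  have : 0 <= \sum_(i | i != k) `|u 0 i| by apply: sumr_ge0.
  lra.
nra.
Qed.

Lemma mxrank_lsc m p (X : 'M[R]_(m, p)) : \forall Y \near X, (\rank X <= \rank Y)%N.
Proof.
set r := \rank X.
pose M : 'M[R]_(r, m) := pid_mx r *m invmx (col_ebase X).
pose N : 'M[R]_(p, r) := invmx (row_ebase X) *m pid_mx r.
have MXN : M *m X *m N = 1%:M.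
  rewrite -[in LHS](mulmx_ebase X) -/r /M /N -!mulmxA (mulKmx (col_ebase_unit X)).
  rewrite !mulmxA (mulmxK (row_ebase_unit X)) pid_mx_id ?rank_leq_row //.
  by rewrite pid_mx_id ?rank_leq_col // pid_mx_1.
set K := r%:R * (p%:R * (m%:R * `|M| * `|N|)).
have K0 : 0 <= K by rewrite !mulr_ge0.
have e0 : 0 < (K + 1)^-1 by rewrite invr_gt0; lra.
apply: filterS (near_dist_lt X e0) => Y XY.
have MYN : r%:R * `|M *m Y *m N - 1%:M| <= K * `|X - Y|.
  have -> : K * `|X - Y| = r%:R * (p%:R * (m%:R * (`|M| * `|Y - X|) * `|N|)).
    by rewrite /K distrC; ring.
  rewrite -MXN -mulmxBl -mulmxBr; apply: ler_wpM2l => //.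
  apply: le_trans (mx_norm_mulmx_le _ _) _; apply: ler_wpM2l => //.
  by apply: ler_wpM2r => //; exact: mx_norm_mulmx_le.
have uMYN : M *m Y *m N \in unitmx.
  apply: unitmx_near_id; apply: le_lt_trans MYN _.
  move: XY; rewrite -[(K + 1)^-1]mul1r ltr_pdivlMr; last lra.
  have := normr_ge0 (X - Y); nra.
rewrite -(mxrank_unit uMYN); apply: leq_trans (mxrankM_maxl _ _) _.
exact: mxrankM_maxr.
Qed.

End RankSemicontinuity.

Section AdmmIterates.
Variables (R : realType) (n m : nat).
Variables (A : 'I_m -> 'M[R]_n) (C : 'M[R]_n) (b : 'cV[R]_m) (sigma : R).
Hypotheses (sA : forall i, sym_mx (A i)) (sC : sym_mx C).

Lemma sym_calAadj y : sym_mx (calAadj A y).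
Proof. by rewrite /sym_mx /calAadj raddf_sum /=; apply: eq_bigr => i _; rewrite linearZ /= sA. Qed.

Lemma sym_admm_step Z : sym_mx (admm_step A C b sigma Z).
Proof.
have sP : sym_mx (psd_proj Z) := (psd_proj_vi Z).1.1.
by rewrite /sym_mx /admm_step !(linearD, linearN, linearZ) /= /projA /pinvA !sym_calAadj sC sP.
Qed.

End AdmmIterates.

Theorem proposition3 (R : realType) (n m : nat)
  (C : 'M[R]_n) (A : 'I_m -> 'M[R]_n) (b : 'cV[R]_m) (sigma : R)
  (Z : nat -> 'M[R]_n) (Xs : 'M[R]_n) (ys : 'cV[R]_m) (Ss : 'M[R]_n) :
  sym_mx C -> (forall i, sym_mx (A i)) ->
  (* calA : S^n -> R^m is surjective *)
  (forall c : 'cV[R]_m, exists X : 'M[R]_n, sym_mx X /\ calA A X = c) ->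
  (* the KKT set is nonempty *)
  (exists X y S, KKT A C b X y S) ->
  0 < sigma ->
  sym_mx (Z 0%N) ->
  (forall k, Z k.+1 = admm_step A C b sigma (Z k)) ->
  KKT A C b Xs ys Ss ->
  Z @ \oo --> (Xs - sigma *: Ss) ->
  (\rank Xs + \rank Ss = n)%N ->
  exists kID : nat, forall k : nat, (kID <= k)%N ->
    \rank (psd_proj (Z k)) = \rank Xs /\
    \rank (sigma^-1 *: psd_proj (- Z k)) = \rank Ss.
Proof.
move=> sC sA _ _ sigma0 sZ0 Zstep [_ _ XS0 Xp Sp] Zcvg rankXS.
have sZ k : sym_mx (Z k) by elim: k => // k IH; rewrite Zstep; apply: sym_admm_step.
have [PXs PSs] := psd_proj_complementary Xp Sp XS0 sigma0.
have cvgP : psd_proj (Z k) @[k --> \oo] --> Xs.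
  by rewrite -PXs; apply: continuous_cvg; [exact: psd_proj_continuous | exact: Zcvg].
have cvgQ : psd_proj (- Z k) @[k --> \oo] --> sigma *: Ss.
  by rewrite -PSs; apply: continuous_cvg; [exact: psd_proj_continuous | exact: cvgN].
have [NX _ rkX] := cvgP _ (mxrank_lsc Xs).
have [NS _ rkS] := cvgQ _ (mxrank_lsc (sigma *: Ss)).
exists (maxn NX NS) => k; rewrite geq_max => /andP[/rkX/= kX /rkS/= kS].
have := mxrank_psd_proj_opp (sZ k).
have sigma_neq0 : sigma != 0 by rewrite gt_eqF.
move: kS; rewrite !mxrank_scale_nz ?invr_neq0 //; lia.
Qed.
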